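(* Let $\mathbf m$, $\gamma$, $W_{m,q}$, $W^{(\infty)}_q$, $\mathcal E_{m,\infty}$, $\mathcal E_{\infty,m}$ be as in hypotheses (i), (ii), (iv) below: (i) $W_{m,q}>0$ with $\sup_{(t,s)\in\mathcal S_J}\|\bar U^{(\mathbf m)}(t,s)\mathcal Q\psi^{(\mathbf m)}\|_\omega\le W_{m,q}\|\psi^{(\mathbf m)}\|_\omega$ for all $\psi\in\ell^1_\omega$, and $W_{m,0}>0$ with $\sup_{(t,s)\in\mathcal S_J}\|\bar U^{(\mathbf m)}(t,s)\phi^{(\mathbf m)}\|_\omega\le W_{m,0}\|\phi^{(\mathbf m)}\|_\omega$ for all $\phi\in\ell^1_\omega$; (ii) functions $W^{(\infty)}_q,W^{(\infty)}:\mathcal S_J\to[0,\infty)$ with $\|\bar U^{(\infty)}(t,s)\mathcal Q\psi^{(\infty)}\|_\omega\le W^{(\infty)}_q(t,s)\|\psi^{(\infty)}\|_\omega$ and $\|\bar U^{(\infty)}(t,s)\phi^{(\infty)}\|_\omega\le W^{(\infty)}(t,s)\|\phi^{(\infty)}\|_\omega$ for all $(t,s)\in\mathcal S_J$, $\psi,\phi\in\ell^1_\omega$; (iii) constants $W_\infty>0$, $\overline W_\infty,\overline W'_{\infty,q},\overline{\overline W}{}'_{\infty,q}\ge0$ with $\sup_{\mathcal S_J}W^{(\infty)}(t,s)\le W_\infty$, $\sup_{\mathcal S_J}\int_s^tW^{(\infty)}(r,s)dr\le\overline W_\infty$, $\sup_{\mathcal S_J}\int_s^tW^{(\infty)}_q(t,r)dr\le\overline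 W'_{\infty,q}$, $\sup_{\mathcal S_J}\int_s^t\int_s^rW^{(\infty)}_q(r,\sigma)d\sigma dr\le\overline{\overline W}{}'_{\infty,q}$ and $\sup_{\mathcal S_J}\int_s^tW^{(\infty)}_q(t,r)(r-s)dr\le\overline{\overline W}{}'_{\infty,q}$; (iv) $\mathcal E_{m,\infty},\mathcal E_{\infty,m}\ge0$ with $\sup_{t\in J}\|\Pi^{(\mathbf m)}D\mathcal N(\bar a(t))(I-\Pi^{(\mathbf m)})\|_{B(\ell^1_\omega)}\le\mathcal E_{m,\infty}$ and $\sup_{t\in J}\|(I-\Pi^{(\mathbf m)})D\mathcal N(\bar a(t))\Pi^{(\mathbf m)}\|_{B(\ell^1_\omega)}\le\mathcal E_{\infty,m}$; (v) for every $s\in[0,\tau)$ and $\phi\in\ell^1_\omega$, $b(t)=U(t,s)\phi$ is continuous and bounded on $(s,\tau]$ and its parts satisfy $b^{(\mathbf m)}(t)=\bar U^{(\mathbf m)}(t,s)\phi^{(\mathbf m)}+\int_s^t\bar U^{(\mathbf m)}(t,r)\Pi^{(\mathbf m)}\mathcal QD\mathcal N(\bar a(r))b^{(\infty)}(r)dr$, $b^{(\infty)}(t)=\bar U^{(\infty)}(t,s)\phi^{(\infty)}+\int_s^t\bar U^{(\infty)}(t,r)(I-\Pi^{(\mathbf m)})\mathcal QD\mathcal N(\bar a(r))b^{(\mathbf m)}(r)dr$. If $\tilde\kappa:=1-W_{m,q}\overline{\overline W}{}'_{\infty,q}\mathcal E_{m,\infty}\mathcal E_{\infty,m}>0$, then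 $\sup_{(t,s)\in\mathcal S_J}\|U(t,s)\phi\|_\omega\le\mathbf W\|\phi\|_\omega$ for all $\phi\in\ell^1_\omega$, where $\mathbf W:=\tilde\kappa^{-1}\left\|\begin{pmatrix}W_{m,0}&W_{m,q}\overline W_\infty\mathcal E_{m,\infty}\\ W_{m,0}\overline W'_{\infty,q}\mathcal E_{\infty,m}&W_\infty\end{pmatrix}\right\|_1$ and $\|\cdot\|_1$ is the maximum absolute column sum.
   Context: Standing setting. Fix $d\ge1$ and $L_1,\dots,L_d>0$. Multi-indices are $\mathbf k=(k_1,\dots,k_d)\in\mathbb Z_{\ge0}^d$; inequalities between multi-indices are componentwise. For $\mathbf m=(m_1,\dots,m_d)$ let $F_{\mathbf m}=\{\mathbf k\ge0:\mathbf k<\mathbf m\}$. Let $\alpha_{\mathbf k}=2^{\delta_{k_1,0}}\cdots2^{\delta_{k_d,0}}$ ($\delta$ the Kronecker delta), fix $\nu_F\ge1$, and set $\omega_{\mathbf k}=\alpha_{\mathbf k}\nu_F^{k_1+\cdots+k_d}$. $\ell^1_\omega$ is the Banach space of real sequences $a=(a_{\mathbf k})_{\mathbf k\ge0}$ with $\|a\|_\omega=\sum_{\mathbf k\ge0}|a_{\mathbf k}|\omega_{\mathbf k}<\infty$; $B(\ell^1_\omega)$ denotes bounded operators with the operator norm. Let $(\mathbf{kL})=((k_1L_1)^2+\cdots+(k_dL_d)^2)^{1/2}$. For given real $\lambda_0,\lambda_1,\lambda_2$ let $\mu_{\mathbf k}=\lambda_0-\lambda_1(\mathbf{kL})^2+\lambda_2(\mathbf{kL})^4$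 and let $\mathcal L$ be the diagonal operator $(\mathcal L\phi)_{\mathbf k}=\mu_{\mathbf k}\phi_{\mathbf k}$ with domain $D(\mathcal L)=\{\phi\in\ell^1_\omega:\mathcal L\phi\in\ell^1_\omega\}$. Fix $q\in\{0,2\}$ and let $(\mathcal Q\phi)_{\mathbf k}=\mathrm i^q(\mathbf{kL})^q\phi_{\mathbf k}$ (a real multiplier since $\mathrm i^2=-1$). $\mathcal N:\ell^1_\omega\to\ell^1_\omega$ is Fréchet differentiable with $\mathcal N(0)=0$, $D\mathcal N(0)=0$. $\Pi^{(\mathbf m)}$ is the projection keeping the entries with $\mathbf k\in F_{\mathbf m}$ and setting the others to $0$; $\phi^{(\mathbf m)}=\Pi^{(\mathbf m)}\phi$, $\phi^{(\infty)}=\phi-\phi^{(\mathbf m)}$. Fix $\tau>0$, $J=(0,\tau]$, $X=C(J;\ell^1_\omega)$ with $\|a\|=\sup_{t\in J}\|a(t)\|_\omega$, and a fixed function $\bar a\in X$ (the approximate solution). $\{U(t,s)\}_{0\le s\le t\le\tau}$ is the evolution operator of the linearized problem $\dot b=\mathcal Lb+\mathcal QD\mathcal N(\bar a(t))b$, $b(s)=\phi$, i.e. $U(t,s)\phi=b(t)$. Let $\mathcal S_J=\{(t,s):0<s<t\le\tau\}$. $\mathbf m$ is a multi-index with $\mu_{\mathbf k}<0$ for $\mathbf k\notin F_{\mathbf m}$, and $\gamma\in[0,1)$. Additional notation: $\bar U^{(\mathbf m)}(t,s)$ is the solution operator (time $s$ to time $t$) of the finite-dimensional linear system $\dot c=\mathcal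 Lc+\Pi^{(\mathbf m)}\mathcal QD\mathcal N(\bar a(t))c$ on sequences supported in $F_{\mathbf m}$ (extended by $0$ outside $F_{\mathbf m}$), and $\bar U^{(\infty)}(t,s)$ is the solution operator of $\dot c=\mathcal Lc+(I-\Pi^{(\mathbf m)})\mathcal QD\mathcal N(\bar a(t))c$ on sequences vanishing on $F_{\mathbf m}$; both are linear. *)

From HB Require Import structures.
From mathcomp Require Import all_boot all_order all_algebra.
From mathcomp Require Import all_classical all_reals all_analysis.
From mathcomp Require Import measurable_realfun.
Set Implicit Arguments. Unset Strict Implicit. Unset Printing Implicit Defensive.
Import Order.TTheory GRing.Theory Num.Theory.
Import numFieldNormedType.Exports.
Local Open Scope classical_set_scope.
Local Open Scope ring_scope.

Definition mindex (d : nat) := {ffun 'I_d -> nat}.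
Definition sq (R : realType) (d : nat) := mindex d -> R.

Section Defs.
Variables (R : realType) (d : nat).

Definition szero : sq R d := fun _ => 0.
Definition sadd (a b : sq R d) : sq R d := fun k => a k + b k.
Definition ssub (a b : sq R d) : sq R d := fun k => a k - b k.
Definition sscale (c : R) (a : sq R d) : sq R d := fun k => c * a k.

Definition alpha (k : mindex d) : R := \prod_(i < d) (if k i == 0%N then 2 else 1).
Definition omega (nuF : R) (k : mindex d) : R := alpha k * nuF ^+ (\sum_(i < d) k i).

Definition wnorm (nuF : R) (a : sq R d) : \bar R :=
  \esum_(k in [set: mindex d]) (`|a k| * omega nuF k)%:E.
Definition inl1w (nuF : R) (a : sq R d) : Prop := (wnorm nuF a < +oo)%E.

Definition inF (m k : mindex d) : bool := [forall i, (k i < m i)%N].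
Definition Pm (m : mindex d) (a : sq R d) : sq R d :=
  fun k => if inF m k then a k else 0.
Definition Pinf (m : mindex d) (a : sq R d) : sq R d := ssub a (Pm m a).

Definition kL2 (L : 'I_d -> R) (k : mindex d) : R :=
  \sum_(i < d) ((k i)%:R * L i) ^+ 2.
Definition mu (l0 l1 l2 : R) (L : 'I_d -> R) (k : mindex d) : R :=
  l0 - l1 * kL2 L k + l2 * (kL2 L k) ^+ 2.
(* (Q phi)_k = i^q (kL)^q phi_k ; for q in {0,2} this is (-(kL)^2)^(q/2) phi_k *)
Definition Qop (q : nat) (L : 'I_d -> R) (a : sq R d) : sq R d :=
  fun k => (- kL2 L k) ^+ (q %/ 2) * a k.

Definition lin_bdd (nuF : R) (T : sq R d -> sq R d) : Prop :=
  (forall x y, inl1w nuF x -> inl1w nuF y -> T (sadd x y) = sadd (T x) (T y)) /\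
  (forall c x, inl1w nuF x -> T (sscale c x) = sscale c (T x)) /\
  exists C : R, forall x, inl1w nuF x ->
    inl1w nuF (T x) /\ (wnorm nuF (T x) <= C%:E * wnorm nuF x)%E.

Definition frechet (nuF : R) (N : sq R d -> sq R d) (DN : sq R d -> sq R d -> sq R d) :
  Prop :=
  forall x, inl1w nuF x ->
    inl1w nuF (N x) /\ lin_bdd nuF (DN x) /\
    forall eps : R, 0 < eps -> exists2 delta : R, 0 < delta &
      forall h, inl1w nuF h -> (wnorm nuF h < delta%:E)%E ->
        (wnorm nuF (ssub (ssub (N (sadd x h)) (N x)) (DN x h))
           <= eps%:E * wnorm nuF h)%E.

Definition wcont_bdd (nuF : R) (f : R -> sq R d) (A : set R) : Prop :=
  (forall t, A t -> inl1w nuF (f t)) /\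
  (forall t, A t -> forall eps : R, 0 < eps -> exists2 delta : R, 0 < delta &
     forall t', A t' -> `|t' - t| < delta ->
       (wnorm nuF (ssub (f t') (f t)) < eps%:E)%E) /\
  (exists C : R, forall t, A t -> (wnorm nuF (f t) <= C%:E)%E).

(* v is the (Bochner) integral over (s,t) of f : R -> ell^1_omega :
   f is strongly measurable (equivalently, every coordinate is Lebesgue
   measurable, ell^1_omega being separable with the coordinates separating),
   int_s^t ||f(r)||_omega dr < oo, and v is computed coordinatewise. *)
Definition bochner (nuF : R) (f : R -> sq R d) (s t : R) (v : sq R d) : Prop :=
  (forall k, measurable_fun `]s, t[ (fun r => f r k)) /\
  (\int[@lebesgue_measure R]_(r in `]s, t[) wnorm nuF (f r) < +oo)%E /\
  (forall k, ((v k)%:E = \int[@lebesgue_measure R]_(r in `]s, t[) (f r k)%:E)%E).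

End Defs.

Definition mx2 (R : pzRingType) (a b c e : R) : 'M[R]_2 :=
  \matrix_(i < 2, j < 2)
    (if i == ord0 then (if j == ord0 then a else b)
     else (if j == ord0 then c else e)).

Definition mxnorm1 (R : realDomainType) (n p : nat) (M : 'M[R]_(n, p)) : R :=
  \big[Num.max/0]_(j < p) \sum_(i < n) `|M i j|.

From HB Require Import structures.
From mathcomp Require Import all_boot all_order all_algebra.
From mathcomp Require Import all_classical all_reals all_analysis.
From mathcomp Require Import measurable_realfun.
From mathcomp Require Import ring lra.
Import Order.TTheory GRing.Theory Num.Theory.
Import numFieldNormedType.Exports.
Local Open Scope classical_set_scope.
Local Open Scope ring_scope.
Set Implicit Arguments. Unset Strict Implicit.

(* Fix s and phi and write b(r) = U(r,s)phi.  Bounding the integrands of the two Duhamel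
   formulas (v) by (i), (ii) and (iv) gives, for s < t <= tau,
     |b^(m)(t)|  <= W_{m,0}|phi^(m)| + W_{m,q}E_{m,oo} int_s^t |b^(oo)(r)| dr,
     |b^(oo)(t)| <= W^(oo)(t,s)|phi^(oo)| + E_{oo,m} int_s^t W_q^(oo)(t,r)|b^(m)(r)| dr.
   Both parts are bounded on (s,tau]; let M_m and M_oo be their suprema.  Feeding M_oo into
   the first inequality and the result into the second bounds M_oo by an affine expression
   in which M_oo reappears only with the factor k = W_{m,q} \bar\bar W'_{oo,q} E_{m,oo} E_{oo,m}
   (via int_s^t W_q^(oo)(t,r)(r-s) dr); feeding M_m into the second and the result into the
   first does the same for M_m (via the double integral).  Since k < 1, adding the two gives
   (1-k)(M_m + M_oo) <= ||A||_1 (|phi^(m)| + |phi^(oo)|) for the matrix A of the statement,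
   and |phi| = |phi^(m)| + |phi^(oo)|. *)

Section WeightedNorm.
Variables (R : realType) (d : nat) (nuF : R).
Hypothesis nuF0 : 0 <= nuF.

Lemma omega_ge0 (k : mindex d) : 0 <= omega nuF k.
Proof.
rewrite /omega mulr_ge0 ?exprn_ge0 //.
by apply: prodr_ge0 => i _; case: ifP.
Qed.

Let wterm_ge0 (a : sq R d) k : (0 <= (`|a k| * omega nuF k)%:E)%E.
Proof. by rewrite lee_fin mulr_ge0 ?omega_ge0. Qed.

Lemma wnorm_ge0 (a : sq R d) : (0 <= wnorm nuF a)%E.
Proof. exact: esum_ge0. Qed.

Lemma wnorm_Pm_Pinf (m : mindex d) (a : sq R d) :
  wnorm nuF a = (wnorm nuF (Pm m a) + wnorm nuF (Pinf m a))%E.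
Proof.
rewrite /wnorm -esumD //; apply: eq_esum => k _; rewrite -EFinD -mulrDl.
by rewrite /Pinf /ssub /Pm; case: ifP => _; rewrite ?subrr ?subr0 normr0 ?addr0 ?add0r.
Qed.

Lemma wnorm_Pm_le m (a : sq R d) : (wnorm nuF (Pm m a) <= wnorm nuF a)%E.
Proof. by rewrite (wnorm_Pm_Pinf m a) leeDl // wnorm_ge0. Qed.

Lemma wnorm_Pinf_le m (a : sq R d) : (wnorm nuF (Pinf m a) <= wnorm nuF a)%E.
Proof. by rewrite (wnorm_Pm_Pinf m a) leeDr // wnorm_ge0. Qed.

Lemma wnorm_sadd_le (a b : sq R d) :
  (wnorm nuF (sadd a b) <= wnorm nuF a + wnorm nuF b)%E.
Proof.
rewrite /wnorm -esumD //; apply: le_esum => k _.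
by rewrite -EFinD lee_fin -mulrDl ler_wpM2r ?omega_ge0 ?ler_normD.
Qed.

Lemma inl1w_Pm m (a : sq R d) : inl1w nuF a -> inl1w nuF (Pm m a).
Proof. exact/le_lt_trans/wnorm_Pm_le. Qed.

Lemma inl1w_Pinf m (a : sq R d) : inl1w nuF a -> inl1w nuF (Pinf m a).
Proof. exact/le_lt_trans/wnorm_Pinf_le. Qed.

(* [fine] sends [+oo] to [0]: [wnormR] is the norm only on ell^1_omega, see [wnormRE]. *)
Definition wnormR (a : sq R d) : R := fine (wnorm nuF a).

Lemma wnormR_ge0 (a : sq R d) : 0 <= wnormR a.
Proof. exact/fine_ge0/wnorm_ge0. Qed.

Lemma wnormRE (a : sq R d) : inl1w nuF a -> (wnormR a)%:E = wnorm nuF a.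
Proof. by move=> al1; rewrite fineK // ge0_fin_numE // wnorm_ge0. Qed.

Lemma wnormR_le (a : sq R d) C : (wnorm nuF a <= C%:E)%E -> wnormR a <= C.
Proof.
move=> aC; have a_fin : wnorm nuF a \is a fin_num.
  by rewrite ge0_fin_numE ?wnorm_ge0 // (le_lt_trans aC) ?ltry.
by rewrite -lee_fin /wnormR fineK.
Qed.

Lemma wnorm_bochner_le (f : R -> sq R d) s t v (h : R -> \bar R) :
  bochner nuF f s t v -> measurable_fun `]s, t[ h ->
  (forall r, s < r -> r < t -> (wnorm nuF (f r) <= h r)%E) ->
  (wnorm nuF v <= \int[@lebesgue_measure R]_(r in `]s, t[) h r)%E.
Proof.
move=> [mf [_ vE]] mh fh.
have mk k : measurable_fun `]s, t[ (fun r => (`|f r k| * omega nuF k)%:E).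
  by apply/measurable_EFinP/measurable_funM => //; exact: measurableT_comp (mf k).
rewrite /wnorm /esum; apply: ge_ereal_sup => _ [X [finX _] <-].
apply: (@le_trans _ _ (\sum_(k \in X) \int[@lebesgue_measure R]_(r in `]s, t[)
          (`|f r k| * omega nuF k)%:E)%E).
  apply: lee_fsum => // k _.
  rewrite EFinM -abse_EFin vE.
  under [X in (_ <= X)%E]eq_integral do rewrite EFinM muleC.
  rewrite ge0_integralZl_EFin ?omega_ge0 //; last first.
    by apply/measurable_EFinP; exact: measurableT_comp (mf k).
  rewrite muleC lee_wpmul2l ?lee_fin ?omega_ge0 //.
  under [X in (_ <= X)%E]eq_integral do rewrite -abse_EFin.
  by apply: le_abse_integral => //; apply/measurable_EFinP; exact: (mf k).
rewrite -ge0_integral_fsum //; apply: ge0_le_integral => //.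
- by move=> r _; exact: fsume_ge0.
- exact: emeasurable_fsum.
- move=> r; rewrite /= in_itv /= => /andP[sr rt]; apply: le_trans (fh r sr rt).
  by apply: ereal_sup_ubound; exists X.
Qed.

Lemma wnorm_duhamel_le (x0 v : sq R d) (f : R -> sq R d) s t (c : \bar R)
    (h : R -> \bar R) :
  bochner nuF f s t v -> measurable_fun `]s, t[ h ->
  (forall r, s < r -> r < t -> (wnorm nuF (f r) <= h r)%E) ->
  (wnorm nuF x0 <= c)%E ->
  (wnorm nuF (sadd x0 v) <= c + \int[@lebesgue_measure R]_(r in `]s, t[) h r)%E.
Proof.
move=> fv mh fh x0c; apply: le_trans (wnorm_sadd_le _ _) _.
by apply: leeD x0c _; exact: wnorm_bochner_le fv mh fh.
Qed.

End WeightedNorm.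

Section Projections.
Variables (R : realType) (d : nat) (m : mindex d).

Lemma Pm_id (a : sq R d) : Pm m (Pm m a) = Pm m a.
Proof. by apply: funext => k; rewrite /Pm; case: (inF m k). Qed.

Lemma Pinf_id (a : sq R d) : Pinf m (Pinf m a) = Pinf m a.
Proof.
by apply: funext => k; rewrite /Pinf /ssub /Pm; case: ifP; rewrite ?subrr ?subr0.
Qed.

Lemma Pm_Qop q L (a : sq R d) : Pm m (Qop q L a) = Qop q L (Pm m a).
Proof. by apply: funext => k; rewrite /Pm /Qop; case: ifP; rewrite ?mulr0. Qed.

Lemma Pinf_Qop q L (a : sq R d) : Pinf m (Qop q L a) = Qop q L (Pinf m a).
Proof.
apply: funext => k; rewrite /Pinf /ssub /Pm /Qop.
by case: ifP; rewrite ?subrr ?mulr0 ?subr0.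
Qed.

End Projections.

Lemma frechet_inl1w (R : realType) d nuF (N : sq R d -> sq R d) DN x h :
  frechet nuF N DN -> inl1w nuF x -> inl1w nuF h -> inl1w nuF (DN x h).
Proof. by move=> frN /frN[_ [[_ [_ [C DNC]]] _]] /DNC[]. Qed.

Lemma integral_itv_cst (R : realType) (a b c : R) : a < b ->
  (\int[@lebesgue_measure R]_(x in `]a, b[) c%:E = (c * (b - a))%:E)%E.
Proof.
move=> ab; rewrite -[X in (X = _)%E]/(\int[_]_(x in _) cst c%:E x)%E.
rewrite (@integral_cst _ _ _ (@lebesgue_measure R) `]a, b[ (measurable_itv _)).
rewrite EFinM; congr (_ * _)%E.
by apply: etrans (lebesgue_measure_itv _) _; rewrite /= lte_fin ab -EFinB.
Qed.

Lemma ge0_integral_lincomb (R : realType) (D : set R) (a b : R)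
    (F G : R -> \bar R) : measurable D -> 0 <= a -> 0 <= b ->
  (forall x, D x -> 0 <= F x)%E -> (forall x, D x -> 0 <= G x)%E ->
  measurable_fun D F -> measurable_fun D G ->
  (\int[@lebesgue_measure R]_(x in D) (a%:E * F x + b%:E * G x) =
   a%:E * \int[@lebesgue_measure R]_(x in D) F x +
   b%:E * \int[@lebesgue_measure R]_(x in D) G x)%E.
Proof.
move=> mD a0 b0 F0 G0 mF mG.
rewrite ge0_integralD //; first by rewrite !ge0_integralZl_EFin.
- by move=> x Dx; rewrite mule_ge0 ?lee_fin ?F0.
- exact: measurable_funeM.
- by move=> x Dx; rewrite mule_ge0 ?lee_fin ?G0.
- exact: measurable_funeM.
Qed.

Lemma mxnorm1_col_le (R : realDomainType) (n p : nat) (M : 'M[R]_(n, p)) j :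
  \sum_(i < n) `|M i j| <= mxnorm1 M.
Proof. exact: (le_bigmax _ (fun j => \sum_(i < n) `|M i j|)). Qed.

Lemma mx2_mulv_le (R : realDomainType) (a b c e x y : R) : 0 <= x -> 0 <= y ->
  (a * x + b * y) + (c * x + e * y) <= mxnorm1 (mx2 a b c e) * (x + y).
Proof.
move=> x0 y0.
have := mxnorm1_col_le (mx2 a b c e) ord0.
have := mxnorm1_col_le (mx2 a b c e) (@ord_max 1).
rewrite !big_ord_recr !big_ord0 /= !mxE /= !add0r => col1 col0.
have ax := ler_wpM2r x0 (ler_norm a); have cx := ler_wpM2r x0 (ler_norm c).
have b_y := ler_wpM2r y0 (ler_norm b); have ey := ler_wpM2r y0 (ler_norm e).
nra.
Qed.

Lemma add_le_of_self_bounds (R : realFieldType) (u v M1 M2 a1 a2 k : R) :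
  0 < 1 - k -> u <= M1 -> v <= M2 -> M1 <= a1 + k * M1 -> M2 <= a2 + k * M2 ->
  u + v <= (1 - k)^-1 * (a1 + a2).
Proof. by move=> k1 uM1 vM2 M1a M2a; rewrite ler_pdivlMl //; nra. Qed.

(* [bm r] and [bi r] play the roles of |b^(m)(r)| and |b^(oo)(r)|, [am] of W_{m,0}|phi^(m)|,
   [cm] of W_{m,q} E_{m,oo}, [ci] of E_{oo,m} and [xi] of |phi^(oo)|. *)
Section CoupledIntegralInequalities.
Variables (R : realType) (s tau : R) (bm bi : R -> R) (Wq Wi : R -> R -> R).
Variables (am cm ci xi Winfc Wbar Wbar'q Wbbar'q : R).
Hypotheses (stau : s < tau) (am0 : 0 <= am) (cm0 : 0 <= cm) (ci0 : 0 <= ci)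
  (xi0 : 0 <= xi).
Hypotheses (bm0 : forall r, 0 <= bm r) (bi0 : forall r, 0 <= bi r).
Hypotheses (bm_ub : exists C, forall r, s < r -> r <= tau -> bm r <= C)
  (bi_ub : exists C, forall r, s < r -> r <= tau -> bi r <= C).
Hypotheses (Wq0 : forall t r, s < r -> r < t -> t <= tau -> 0 <= Wq t r)
  (Wi0 : forall t, s < t -> t <= tau -> 0 <= Wi t s).
Hypothesis W_measurable : forall t, s < t -> t <= tau ->
  measurable_fun `]s, t[ (fun r => Wi r s) /\
  measurable_fun `]s, t[ (fun r => Wq t r) /\
  measurable_fun `]s, t[
    (fun r => \int[@lebesgue_measure R]_(sg in `]s, r[) (Wq r sg)%:E)%E.
Hypothesis Wi_le : forall t, s < t -> t <= tau -> Wi t s <= Winfc.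
Hypothesis int_Wi_le : forall t, s < t -> t <= tau ->
  (\int[@lebesgue_measure R]_(r in `]s, t[) (Wi r s)%:E <= Wbar%:E)%E.
Hypothesis int_Wq_le : forall t, s < t -> t <= tau ->
  (\int[@lebesgue_measure R]_(r in `]s, t[) (Wq t r)%:E <= Wbar'q%:E)%E.
Hypothesis int_int_Wq_le : forall t, s < t -> t <= tau ->
  (\int[@lebesgue_measure R]_(r in `]s, t[)
     (\int[@lebesgue_measure R]_(sg in `]s, r[) (Wq r sg)%:E) <= Wbbar'q%:E)%E.
Hypothesis int_Wq_shift_le : forall t, s < t -> t <= tau ->
  (\int[@lebesgue_measure R]_(r in `]s, t[) (Wq t r * (r - s))%:E
     <= Wbbar'q%:E)%E.
Hypothesis bm_duhamel : forall t (g : R -> \bar R), s < t -> t <= tau ->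
  measurable_fun `]s, t[ g ->
  (forall r, s < r -> r < t -> ((bi r)%:E <= g r)%E) ->
  ((bm t)%:E <= am%:E + cm%:E * \int[@lebesgue_measure R]_(r in `]s, t[) g r)%E.
Hypothesis bi_duhamel : forall t (g : R -> \bar R), s < t -> t <= tau ->
  measurable_fun `]s, t[ g ->
  (forall r, s < r -> r < t -> ((bm r)%:E <= g r)%E) ->
  ((bi t)%:E <= (Wi t s * xi)%:E +
     ci%:E * \int[@lebesgue_measure R]_(r in `]s, t[) ((Wq t r)%:E * g r))%E.

Let S := [set r | s < r /\ r <= tau].

Let le_sup_S {f : R -> R} : (exists C, forall r, s < r -> r <= tau -> f r <= C) ->
  forall r, s < r -> r <= tau -> f r <= sup (f @` S).
Proof.
move=> [C fC] r sr rtau; apply: sup_upper_bound; last by exists r.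
by split; [exists (f r), r | exists C => _ [r' [? ?] <-]; exact: fC].
Qed.

Let sup_S_le (f : R -> R) K : (forall r, s < r -> r <= tau -> f r <= K) ->
  sup (f @` S) <= K.
Proof.
move=> fK; apply: ge_sup; first by exists (f tau), tau; split.
by move=> _ [r [sr rtau] <-]; exact: fK.
Qed.

Let Mm := sup (bm @` S).
Let Mi := sup (bi @` S).
Let bm_le_Mm := le_sup_S bm_ub.
Let bi_le_Mi := le_sup_S bi_ub.
Let Mm0 : 0 <= Mm. Proof. exact: le_trans (bm_le_Mm stau (lexx _)). Qed.
Let Mi0 : 0 <= Mi. Proof. exact: le_trans (bi_le_Mi stau (lexx _)). Qed.

Let bm_le_linear r : s < r -> r <= tau -> bm r <= am + cm * Mi * (r - s).
Proof.
move=> sr rtau; rewrite -lee_fin EFinD -mulrA EFinM -integral_itv_cst //.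
apply: bm_duhamel => // r' sr' r'r.
by rewrite lee_fin bi_le_Mi // (ltW (lt_le_trans r'r rtau)).
Qed.

Lemma sup_bi_le : Mi <= Winfc * xi + ci * (am * Wbar'q + cm * Mi * Wbbar'q).
Proof.
apply: sup_S_le => t st ttau.
have [_ [mWq _]] := W_measurable st ttau.
have Wq_ge0 r : r \in `]s, t[ -> 0 <= Wq t r.
  by rewrite in_itv /= => /andP[sr rt]; exact: Wq0 sr rt ttau.
have mlin : measurable_fun `]s, t[ (fun r => am + cm * Mi * (r - s)).
  by apply/measurable_funD/measurable_funM => //; exact: measurable_funB.
have := bi_duhamel (g := fun r => (am + cm * Mi * (r - s))%:E) st ttau
  ((measurable_EFinP _ _).2 mlin)
  (fun r sr rt => bm_le_linear sr (ltW (lt_le_trans rt ttau))).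
rewrite (@eq_integral _ _ _ (@lebesgue_measure R) _ (fun r =>
  am%:E * (Wq t r)%:E + (cm * Mi)%:E * (Wq t r * (r - s))%:E)%E); last first.
  by move=> r _; rewrite -!EFinM -EFinD; congr EFin; ring.
rewrite ge0_integral_lincomb //; last 4 first.
- exact: mulr_ge0.
- move=> r; rewrite /= in_itv /= => /andP[sr rt].
  by rewrite lee_fin mulr_ge0 ?subr_ge0 ?(ltW sr) // (Wq0 sr rt ttau).
- exact/measurable_EFinP.
- by apply/measurable_EFinP/measurable_funM => //; exact: measurable_funB.
rewrite -lee_fin => /le_trans; apply.
rewrite EFinD; apply: leeD; first by rewrite lee_fin ler_wpM2r ?Wi_le.
rewrite [X in (_ <= X)%E]EFinM; apply: lee_wpmul2l; first by rewrite lee_fin.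
rewrite EFinD; apply: leeD; rewrite [X in (_ <= X)%E]EFinM; apply: lee_wpmul2l.
- by rewrite lee_fin.
- exact: int_Wq_le.
- by rewrite lee_fin mulr_ge0.
- exact: int_Wq_shift_le.
Qed.

Let I r := (\int[@lebesgue_measure R]_(sg in `]s, r[) (Wq r sg)%:E)%E.

Let I_ge0 r : s < r -> r <= tau -> (0 <= I r)%E.
Proof.
move=> sr rtau; apply: integral_ge0 => x; rewrite /= in_itv /= => /andP[sx xr].
by rewrite lee_fin (Wq0 sx xr rtau).
Qed.

Let bi_le r : s < r -> r <= tau -> ((bi r)%:E <= (Wi r s * xi)%:E + (ci * Mm)%:E * I r)%E.
Proof.
move=> sr rtau; have [_ [mWq _]] := W_measurable sr rtau.
have := bi_duhamel (g := fun=> Mm%:E) sr rtau (measurable_cst _)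
  (fun r' sr' r'r => bm_le_Mm sr' (ltW (lt_le_trans r'r rtau))).
rewrite (@eq_integral _ _ _ (@lebesgue_measure R) _ (fun sg => Mm%:E * (Wq r sg)%:E)%E);
  last by move=> sg _; rewrite muleC.
rewrite ge0_integralZl_EFin ?EFinM ?muleA //.
- move=> x; rewrite /= in_itv /= => /andP[sx xr].
  by rewrite lee_fin (Wq0 sx xr rtau).
- exact/measurable_EFinP.
Qed.

Lemma sup_bm_le : Mm <= am + cm * (xi * Wbar + ci * Mm * Wbbar'q).
Proof.
apply: sup_S_le => t st ttau.
have [mWi [_ mI]] := W_measurable st ttau.
have := bm_duhamel (g := fun r => xi%:E * (Wi r s)%:E + (ci * Mm)%:E * I r)%E st ttau
  (emeasurable_funD (measurable_funeM _ ((measurable_EFinP _ _).2 mWi))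
                    (measurable_funeM _ mI))
  (fun r sr rt => ltac:(rewrite /= -EFinM mulrC;
                        exact: bi_le sr (ltW (lt_le_trans rt ttau)))).
rewrite ge0_integral_lincomb //; last 4 first.
- exact: mulr_ge0.
- move=> x; rewrite /= in_itv /= => /andP[sx xt].
  by rewrite lee_fin (Wi0 sx (ltW (lt_le_trans xt ttau))).
- move=> x; rewrite /= in_itv /= => /andP[sx xt].
  exact: I_ge0 sx (ltW (lt_le_trans xt ttau)).
- exact/measurable_EFinP.
rewrite -lee_fin => /le_trans; apply.
rewrite EFinD; apply: leeD => //.
rewrite [X in (_ <= X)%E]EFinM; apply: lee_wpmul2l; first by rewrite lee_fin.
rewrite EFinD; apply: leeD; rewrite [X in (_ <= X)%E]EFinM; apply: lee_wpmul2l.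
- by rewrite lee_fin.
- exact: int_Wi_le.
- by rewrite lee_fin mulr_ge0.
- exact: int_int_Wq_le.
Qed.

Lemma coupled_sup_bound : 0 < 1 - cm * ci * Wbbar'q ->
  forall r, s < r -> r <= tau ->
  bm r + bi r <= (1 - cm * ci * Wbbar'q)^-1 *
                 (am * (1 + ci * Wbar'q) + xi * (cm * Wbar + Winfc)).
Proof.
move=> kappa0 r sr rtau.
rewrite (_ : am * (1 + ci * Wbar'q) + xi * (cm * Wbar + Winfc) =
  (am + cm * xi * Wbar) + (Winfc * xi + ci * am * Wbar'q)); last by ring.
apply: (@add_le_of_self_bounds _ _ _ Mm Mi) kappa0 (bm_le_Mm sr rtau) (bi_le_Mi sr rtau) _ _.
- by have := sup_bm_le; lra.
- by have := sup_bi_le; lra.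
Qed.

End CoupledIntegralInequalities.

Section LinearizedEvolution.
Variables (R : realType) (d : nat) (nuF : R) (L : 'I_d -> R) (q : nat).
Variables (DN : sq R d -> sq R d -> sq R d) (tau : R) (abar : R -> sq R d).
Variables (U Um Uinf : R -> R -> sq R d -> sq R d) (m : mindex d).
Variables (Wmq Wm0 : R) (Wqinf Winf : R -> R -> R).
Variables (Winfc Wbar Wbar'q Wbbar'q Emi Eim : R) (s : R) (phi : sq R d).
Hypotheses (nuF0 : 0 <= nuF) (s0 : 0 < s) (phi_l1 : inl1w nuF phi).
Hypotheses (Wmq0 : 0 < Wmq) (Wm00 : 0 < Wm0) (Emi0 : 0 <= Emi) (Eim0 : 0 <= Eim).
Hypothesis DN_l1 : forall r x, 0 < r -> r <= tau -> inl1w nuF x ->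
  inl1w nuF (DN (abar r) x).
Hypothesis Um_Q_le : forall psi, inl1w nuF psi ->
  forall t r, 0 < r -> r < t -> t <= tau ->
  (wnorm nuF (Um t r (Qop q L (Pm m psi))) <= Wmq%:E * wnorm nuF (Pm m psi))%E.
Hypothesis Um_le : forall x, inl1w nuF x ->
  forall t r, 0 < r -> r < t -> t <= tau ->
  (wnorm nuF (Um t r (Pm m x)) <= Wm0%:E * wnorm nuF (Pm m x))%E.
Hypothesis W_ge0 : forall t r, 0 < r -> r < t -> t <= tau ->
  0 <= Wqinf t r /\ 0 <= Winf t r.
Hypothesis Uinf_Q_le : forall t r, 0 < r -> r < t -> t <= tau ->
  forall psi, inl1w nuF psi ->
  (wnorm nuF (Uinf t r (Qop q L (Pinf m psi)))
     <= (Wqinf t r)%:E * wnorm nuF (Pinf m psi))%E.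
Hypothesis Uinf_le : forall t r, 0 < r -> r < t -> t <= tau ->
  forall x, inl1w nuF x ->
  (wnorm nuF (Uinf t r (Pinf m x)) <= (Winf t r)%:E * wnorm nuF (Pinf m x))%E.
Hypothesis W_measurable : forall t r, 0 < r -> r < t -> t <= tau ->
  measurable_fun `]r, t[ (fun r' => Winf r' r) /\
  measurable_fun `]r, t[ (fun r' => Wqinf t r') /\
  measurable_fun `]r, t[
    ((fun r' => \int[@lebesgue_measure R]_(sg in `]r, r'[) (Wqinf r' sg)%:E)%E
      : R -> \bar R).
Hypothesis Winf_le : forall t r, 0 < r -> r < t -> t <= tau -> Winf t r <= Winfc.
Hypothesis int_Winf_le : forall t r, 0 < r -> r < t -> t <= tau ->
  (\int[@lebesgue_measure R]_(r' in `]r, t[) (Winf r' r)%:E <= Wbar%:E)%E.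
Hypothesis int_Wqinf_le : forall t r, 0 < r -> r < t -> t <= tau ->
  (\int[@lebesgue_measure R]_(r' in `]r, t[) (Wqinf t r')%:E <= Wbar'q%:E)%E.
Hypothesis int_int_Wqinf_le : forall t r, 0 < r -> r < t -> t <= tau ->
  (\int[@lebesgue_measure R]_(r' in `]r, t[)
     (\int[@lebesgue_measure R]_(sg in `]r, r'[) (Wqinf r' sg)%:E) <= Wbbar'q%:E)%E.
Hypothesis int_Wqinf_shift_le : forall t r, 0 < r -> r < t -> t <= tau ->
  (\int[@lebesgue_measure R]_(r' in `]r, t[) (Wqinf t r' * (r' - r))%:E
     <= Wbbar'q%:E)%E.
Hypothesis Emi_le : forall t, 0 < t -> t <= tau -> forall x, inl1w nuF x ->
  (wnorm nuF (Pm m (DN (abar t) (Pinf m x))) <= Emi%:E * wnorm nuF x)%E.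
Hypothesis Eim_le : forall t, 0 < t -> t <= tau -> forall x, inl1w nuF x ->
  (wnorm nuF (Pinf m (DN (abar t) (Pm m x))) <= Eim%:E * wnorm nuF x)%E.
Hypothesis U_cont : wcont_bdd nuF (fun r => U r s phi) `]s, tau].
Hypothesis U_duhamel : forall t, s < t -> t <= tau ->
  (exists v, bochner nuF
     (fun r => Um t r (Pm m (Qop q L (DN (abar r) (Pinf m (U r s phi)))))) s t v /\
   Pm m (U t s phi) = sadd (Um t s (Pm m phi)) v) /\
  (exists v, bochner nuF
     (fun r => Uinf t r (Pinf m (Qop q L (DN (abar r) (Pm m (U r s phi)))))) s t v /\
   Pinf m (U t s phi) = sadd (Uinf t s (Pinf m phi)) v).

Let U_l1 r : s < r -> r <= tau -> inl1w nuF (U r s phi).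
Proof. by move=> sr rtau; apply: U_cont.1; rewrite /= in_itv /= sr rtau. Qed.

Lemma Pm_integrand_le t r : s < r -> r < t -> t <= tau ->
  (wnorm nuF (Um t r (Pm m (Qop q L (DN (abar r) (Pinf m (U r s phi))))))
     <= (Wmq * Emi)%:E * (wnormR nuF (Pinf m (U r s phi)))%:E)%E.
Proof.
move=> sr rt ttau; have r0 := lt_trans s0 sr; have rtau := ltW (lt_le_trans rt ttau).
have Ul1r := U_l1 sr rtau.
rewrite Pm_Qop; apply: le_trans (Um_Q_le (DN_l1 r0 rtau (inl1w_Pinf nuF0 m Ul1r)) r0 rt ttau) _.
rewrite EFinM -muleA; apply: lee_wpmul2l; first by rewrite lee_fin ltW.
rewrite (wnormRE nuF0); last exact: inl1w_Pinf.
by have := Emi_le r0 rtau (inl1w_Pinf nuF0 m Ul1r); rewrite Pinf_id.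
Qed.

Lemma Pinf_integrand_le t r : s < r -> r < t -> t <= tau ->
  (wnorm nuF (Uinf t r (Pinf m (Qop q L (DN (abar r) (Pm m (U r s phi))))))
     <= Eim%:E * ((Wqinf t r)%:E * (wnormR nuF (Pm m (U r s phi)))%:E))%E.
Proof.
move=> sr rt ttau; have r0 := lt_trans s0 sr; have rtau := ltW (lt_le_trans rt ttau).
have Ul1r := U_l1 sr rtau.
rewrite Pinf_Qop; apply: le_trans (Uinf_Q_le r0 rt ttau (DN_l1 r0 rtau (inl1w_Pm nuF0 m Ul1r))) _.
rewrite muleCA; apply: lee_wpmul2l; first by rewrite lee_fin (W_ge0 r0 rt ttau).1.
rewrite (wnormRE nuF0); last exact: inl1w_Pm.
by have := Eim_le r0 rtau (inl1w_Pm nuF0 m Ul1r); rewrite Pm_id.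
Qed.

Lemma Pm_U_duhamel_le t (g : R -> \bar R) : s < t -> t <= tau ->
  measurable_fun `]s, t[ g ->
  (forall r, s < r -> r < t -> ((wnormR nuF (Pinf m (U r s phi)))%:E <= g r)%E) ->
  ((wnormR nuF (Pm m (U t s phi)))%:E <= (Wm0 * wnormR nuF (Pm m phi))%:E +
     (Wmq * Emi)%:E * \int[@lebesgue_measure R]_(r in `]s, t[) g r)%E.
Proof.
move=> st ttau mg hg.
rewrite (wnormRE nuF0); last exact/(inl1w_Pm nuF0)/U_l1.
have [[v [fv ->]] _] := U_duhamel st ttau.
rewrite -ge0_integralZl_EFin ?mulr_ge0 ?(ltW Wmq0) //; last first.
  move=> r; rewrite /= in_itv /= => /andP[sr rt].
  by apply: le_trans (hg r sr rt); rewrite lee_fin wnormR_ge0.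
apply: wnorm_duhamel_le fv _ _ _ => //.
- exact: measurable_funeM.
- move=> r sr rt; apply: le_trans (Pm_integrand_le sr rt ttau) _.
  by apply: lee_wpmul2l; [rewrite lee_fin mulr_ge0 // ltW | exact: hg].
- rewrite EFinM (wnormRE nuF0); last exact: inl1w_Pm.
  exact: (Um_le phi_l1 s0 st ttau).
Qed.

Lemma Pinf_U_duhamel_le t (g : R -> \bar R) : s < t -> t <= tau ->
  measurable_fun `]s, t[ g ->
  (forall r, s < r -> r < t -> ((wnormR nuF (Pm m (U r s phi)))%:E <= g r)%E) ->
  ((wnormR nuF (Pinf m (U t s phi)))%:E <= (Winf t s * wnormR nuF (Pinf m phi))%:E +
     Eim%:E * \int[@lebesgue_measure R]_(r in `]s, t[) ((Wqinf t r)%:E * g r))%E.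
Proof.
move=> st ttau mg hg.
rewrite (wnormRE nuF0); last exact/(inl1w_Pinf nuF0)/U_l1.
have [_ [v [fv ->]]] := U_duhamel st ttau.
have mWg : measurable_fun `]s, t[ (fun r => (Wqinf t r)%:E * g r)%E.
  exact: emeasurable_funM ((measurable_EFinP _ _).2 (W_measurable s0 st ttau).2.1) mg.
rewrite -ge0_integralZl_EFin //; last first.
  move=> r; rewrite /= in_itv /= => /andP[sr rt]; apply: mule_ge0.
    by rewrite lee_fin (W_ge0 (lt_trans s0 sr) rt ttau).1.
  by apply: le_trans (hg r sr rt); rewrite lee_fin wnormR_ge0.
apply: wnorm_duhamel_le fv _ _ _ => //.
- exact: measurable_funeM.
- move=> r sr rt; apply: le_trans (Pinf_integrand_le sr rt ttau) _.
  apply: lee_wpmul2l; first by rewrite lee_fin.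
  apply: lee_wpmul2l; last exact: hg.
  by rewrite lee_fin (W_ge0 (lt_trans s0 sr) rt ttau).1.
- rewrite EFinM (wnormRE nuF0); last exact: inl1w_Pinf.
  exact: (Uinf_le s0 st ttau phi_l1).
Qed.

Let P_U_ub (P : sq R d -> sq R d) : (forall a, wnorm nuF (P a) <= wnorm nuF a)%E ->
  exists C, forall r, s < r -> r <= tau -> wnormR nuF (P (U r s phi)) <= C.
Proof.
move=> PC; have [_ [_ [C UC]]] := U_cont.
exists C => r sr rtau; apply/(wnormR_le nuF0)/(le_trans (PC _))/UC.
by rewrite /= in_itv /= sr rtau.
Qed.

Lemma U_parts_le t : 0 < 1 - Wmq * Wbbar'q * Emi * Eim -> s < t -> t <= tau ->
  wnormR nuF (Pm m (U t s phi)) + wnormR nuF (Pinf m (U t s phi)) <=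
  (1 - Wmq * Wbbar'q * Emi * Eim)^-1 *
  mxnorm1 (mx2 Wm0 (Wmq * Wbar * Emi) (Wm0 * Wbar'q * Eim) Winfc) *
  (wnormR nuF (Pm m phi) + wnormR nuF (Pinf m phi)).
Proof.
move=> kappa0 st ttau; rewrite -mulrA.
have := coupled_sup_bound (lt_le_trans st ttau)
  (mulr_ge0 (ltW Wm00) (wnormR_ge0 nuF0 (Pm m phi))) (mulr_ge0 (ltW Wmq0) Emi0)
  Eim0 (wnormR_ge0 nuF0 (Pinf m phi))
  (fun r => wnormR_ge0 nuF0 (Pm m (U r s phi)))
  (fun r => wnormR_ge0 nuF0 (Pinf m (U r s phi)))
  (P_U_ub (wnorm_Pm_le nuF0 m)) (P_U_ub (wnorm_Pinf_le nuF0 m))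
  (fun t r sr rt ttau => (W_ge0 (lt_trans s0 sr) rt ttau).1)
  (fun t st ttau => (W_ge0 s0 st ttau).2) (fun t => W_measurable s0)
  (fun t => Winf_le s0) (fun t => int_Winf_le s0) (fun t => int_Wqinf_le s0)
  (fun t => int_int_Wqinf_le s0) (fun t => int_Wqinf_shift_le s0)
  Pm_U_duhamel_le Pinf_U_duhamel_le.
rewrite (_ : Wmq * Emi * Eim * Wbbar'q = Wmq * Wbbar'q * Emi * Eim); last by ring.
move=> /(_ kappa0 t st ttau) /le_trans; apply.
apply: ler_wpM2l; first by rewrite invr_ge0 ltW.
have := mx2_mulv_le Wm0 (Wmq * Wbar * Emi) (Wm0 * Wbar'q * Eim) Winfc
  (wnormR_ge0 nuF0 (Pm m phi)) (wnormR_ge0 nuF0 (Pinf m phi)).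
lra.
Qed.

End LinearizedEvolution.

Theorem mainTheorem2
  (R : realType) (d : nat) (L : 'I_d -> R) (nuF : R)
  (l0 l1 l2 : R) (q : nat)
  (N : sq R d -> sq R d) (DN : sq R d -> sq R d -> sq R d)
  (tau : R) (abar : R -> sq R d)
  (U Um Uinf : R -> R -> sq R d -> sq R d)
  (m : mindex d) (gamma : R)
  (Wmq Wm0 : R) (Wqinf Winf : R -> R -> R)
  (Winfc Wbar Wbar'q Wbbar'q : R) (Emi Eim : R) :
  (* standing setting *)
  (0 < d)%N -> (forall i, 0 < L i) -> 1 <= nuF -> (q = 0 \/ q = 2)%N ->
  frechet nuF N DN -> N (@szero R d) = @szero R d ->
  (forall x, inl1w nuF x -> DN (@szero R d) x = @szero R d) ->
  0 < tau ->
  wcont_bdd nuF abar `]0, tau] ->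
  (forall k, ~~ inF m k -> mu l0 l1 l2 L k < 0) ->
  0 <= gamma < 1 ->
  (* (i) *)
  0 < Wmq ->
  (forall psi, inl1w nuF psi -> forall t s, 0 < s -> s < t -> t <= tau ->
     (wnorm nuF (Um t s (Qop q L (Pm m psi))) <= Wmq%:E * wnorm nuF (Pm m psi))%E) ->
  0 < Wm0 ->
  (forall phi, inl1w nuF phi -> forall t s, 0 < s -> s < t -> t <= tau ->
     (wnorm nuF (Um t s (Pm m phi)) <= Wm0%:E * wnorm nuF (Pm m phi))%E) ->
  (* (ii) *)
  (forall t s, 0 < s -> s < t -> t <= tau -> 0 <= Wqinf t s /\ 0 <= Winf t s) ->
  (forall t s, 0 < s -> s < t -> t <= tau -> forall psi, inl1w nuF psi ->
     (wnorm nuF (Uinf t s (Qop q L (Pinf m psi))) <= (Wqinf t s)%:E * wnorm nuF (Pinf m psi))%E) ->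
  (forall t s, 0 < s -> s < t -> t <= tau -> forall phi, inl1w nuF phi ->
     (wnorm nuF (Uinf t s (Pinf m phi)) <= (Winf t s)%:E * wnorm nuF (Pinf m phi))%E) ->
  (* (iii) : the integrals below exist (measurability of the integrands) *)
  (forall t s, 0 < s -> s < t -> t <= tau ->
     measurable_fun `]s, t[ (fun r => Winf r s) /\
     measurable_fun `]s, t[ (fun r => Wqinf t r) /\
     measurable_fun `]s, t[
       ((fun r => \int[@lebesgue_measure R]_(sg in `]s, r[) (Wqinf r sg)%:E)%E
         : R -> \bar R)) ->
  0 < Winfc -> 0 <= Wbar -> 0 <= Wbar'q -> 0 <= Wbbar'q ->
  (forall t s, 0 < s -> s < t -> t <= tau -> Winf t s <= Winfc) ->
  (forall t s, 0 < s -> s < t -> t <= tau ->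
     (\int[@lebesgue_measure R]_(r in `]s, t[) (Winf r s)%:E <= Wbar%:E)%E) ->
  (forall t s, 0 < s -> s < t -> t <= tau ->
     (\int[@lebesgue_measure R]_(r in `]s, t[) (Wqinf t r)%:E <= Wbar'q%:E)%E) ->
  (forall t s, 0 < s -> s < t -> t <= tau ->
     (\int[@lebesgue_measure R]_(r in `]s, t[)
        (\int[@lebesgue_measure R]_(sg in `]s, r[) (Wqinf r sg)%:E) <= Wbbar'q%:E)%E) ->
  (forall t s, 0 < s -> s < t -> t <= tau ->
     (\int[@lebesgue_measure R]_(r in `]s, t[) (Wqinf t r * (r - s))%:E
        <= Wbbar'q%:E)%E) ->
  (* (iv) : operator-norm bounds, sup over t in J *)
  0 <= Emi -> 0 <= Eim ->
  (forall t, 0 < t -> t <= tau -> forall x, inl1w nuF x ->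
     (wnorm nuF (Pm m (DN (abar t) (Pinf m x))) <= Emi%:E * wnorm nuF x)%E) ->
  (forall t, 0 < t -> t <= tau -> forall x, inl1w nuF x ->
     (wnorm nuF (Pinf m (DN (abar t) (Pm m x))) <= Eim%:E * wnorm nuF x)%E) ->
  (* (v) *)
  (forall s phi, 0 <= s -> s < tau -> inl1w nuF phi ->
     wcont_bdd nuF (fun t => U t s phi) `]s, tau] /\
     forall t, s < t -> t <= tau ->
       (exists v, bochner nuF
          (fun r => Um t r (Pm m (Qop q L (DN (abar r) (Pinf m (U r s phi)))))) s t v /\
        Pm m (U t s phi) = sadd (Um t s (Pm m phi)) v) /\
       (exists v, bochner nuF
          (fun r => Uinf t r (Pinf m (Qop q L (DN (abar r) (Pm m (U r s phi)))))) s t v /\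
        Pinf m (U t s phi) = sadd (Uinf t s (Pinf m phi)) v)) ->
  (* conclusion *)
  0 < 1 - Wmq * Wbbar'q * Emi * Eim ->
  forall phi, inl1w nuF phi -> forall t s, 0 < s -> s < t -> t <= tau ->
    (wnorm nuF (U t s phi) <=
       ((1 - Wmq * Wbbar'q * Emi * Eim)^-1 *
        mxnorm1 (mx2 Wm0 (Wmq * Wbar * Emi) (Wm0 * Wbar'q * Eim) Winfc))%:E
       * wnorm nuF phi)%E.
Proof.
move=> _ _ nuF1 _ frN _ _ _ abarC _ _ Wmq0 HUmq Wm00 HUm0 Wnn HUiq HUi mW
  _ _ _ _ HWinf HWbar HWbar'q HWbb1 HWbb2 Emi0 Eim0 HEmi HEim HV kappa0
  phi phil1 t s s0 st ttau.
have nuF0 : 0 <= nuF := le_trans ler01 nuF1.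
have [Ucont Uduh] := HV s phi (ltW s0) (lt_le_trans st ttau) phil1.
have DNl1 r x : 0 < r -> r <= tau -> inl1w nuF x -> inl1w nuF (DN (abar r) x).
  by move=> r0 rtau; apply: frechet_inl1w frN _; apply: abarC.1; rewrite /= in_itv /= r0.
have := U_parts_le nuF0 s0 phil1 Wmq0 Wm00 Emi0 Eim0 DNl1 HUmq HUm0 Wnn HUiq HUi mW
  HWinf HWbar HWbar'q HWbb1 HWbb2 HEmi HEim Ucont Uduh kappa0 st ttau.
have Ul1 : inl1w nuF (U t s phi) by apply: Ucont.1; rewrite /= in_itv /= st ttau.
have [PmU PinfU] := (inl1w_Pm nuF0 m Ul1, inl1w_Pinf nuF0 m Ul1).
have [Pmphi Pinfphi] := (inl1w_Pm nuF0 m phil1, inl1w_Pinf nuF0 m phil1).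
rewrite (wnorm_Pm_Pinf nuF0 m (U t s phi)) (wnorm_Pm_Pinf nuF0 m phi).
by rewrite -!(wnormRE nuF0) // -!EFinD -EFinM lee_fin.
Qed.
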